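(* Let $n\ge 1$ be an integer and let $\alpha_0,\ldots,\alpha_{2n+1},\eta\in\mathbb{C}$ with $\sum_{i=0}^{2n+1}\alpha_i=1$. Consider the Hamiltonian system \[ \frac{dx_i}{dt}=\frac{\partial H}{\partial y_i},\qquad \frac{dy_i}{dt}=-\frac{\partial H}{\partial x_i},\qquad i=0,\ldots,n, \] with Hamiltonian \[ H=\frac1t\sum_{i=0}^{n}\Big\{\tfrac12 x_i^2y_i^2-\alpha_{2i+2}^{2n-2i-1}x_iy_i+\sum_{j=0}^{i-1}x_i(x_iy_i+\alpha_{2i+1})y_j\Big\}+\frac{1}{1-t}\sum_{i=0}^{n}\sum_{j=0}^{n}x_i(x_iy_i+\alpha_{2i+1})y_j , \] where the dependent variables satisfy $\sum_{i=0}^n x_iy_i+\eta=0$. Then this system admits the specialization $y_i=0$ $(i=0,\ldots,n)$, $\eta=0$ (i.e. with $\eta=0$, setting $y_0=\cdots=y_n\equiv0$ is compatible with the system), and under this specialization the vector $\mathbf{x}={}^t(x_0,\ldots,x_n)$ satisfies the linear system on $\mathbb{P}^1(\mathbb{C})$ \[ \frac{d\mathbf{x}}{dt}=\Big(\frac{A_0}{t}+\frac{A_1}{1-t}\Big)\mathbf{x}, \] with \[ A_0=\sum_{i=0}^{n-1}\big(-\alpha_{2i+2}^{2n-2i-1}\big)E_{i,i}+\sum_{i=0}^{n-1}\sum_{j=i+1}^{n}\alpha_{2j+1}E_{i,j},\qquad A_1=\sum_{i=0}^{n}\sum_{j=0}^{n}\alpha_{2j+1}E_{i,j}. \] Furthermore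 this linear system is of Fuchsian type with regular singular points at $t=0,1,\infty$, and the eigenvalues of its residue matrices are: $-\alpha_2^{2n-1},-\alpha_4^{2n-3},\ldots,-\alpha_{2n}^{1},0$ at $t=0$; $0,\ldots,0$ ($n$ times), $-\sum_{i=0}^n\alpha_{2i+1}$ at $t=1$; $\alpha_1^{2n},\alpha_3^{2n-2},\ldots,\alpha_{2n-1}^{2},\alpha_{2n+1}$ at $t=\infty$.
   Context: Indices of the parameters $\alpha_i$ are taken modulo $2n+2$. For integers $k,l$, $\alpha_k^l=0$ if $l<0$ and $\alpha_k^l=\sum_{i=k}^{k+l}\alpha_i$ if $l\ge0$. $E_{i,j}=(\delta_{i,k}\delta_{j,l})_{k,l=0}^{n}$ denotes the $(n+1)\times(n+1)$ matrix unit (rows and columns indexed $0,\ldots,n$). *)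

From HB Require Import structures.
From mathcomp Require Import all_boot all_order all_algebra.
From mathcomp Require Import mpoly.
Set Implicit Arguments. Unset Strict Implicit. Unset Printing Implicit Defensive.
Import Order.TTheory GRing.Theory Num.Theory.
Local Open Scope ring_scope.

Section Defs.
Variable K : numClosedFieldType.
Variable n : nat.

(* parameters alpha_0, ..., alpha_{2n+1}; indices taken modulo 2n+2 *)
Definition aidx (a : 'I_(n.*2.+2) -> K) (k : nat) : K := a (inZp k).

(* alpha_k^l = 0 if l < 0, and sum_{i=k}^{k+l} alpha_i if l >= 0 *)
Definition asum (a : 'I_(n.*2.+2) -> K) (k : nat) (l : int) : K :=
  if (l < 0)%R then 0 else \sum_(k <= i < k + `|l|%N.+1) aidx a i.

Definition xv (i : 'I_n.+1) : {mpoly K[n.+1 + n.+1]} := 'X_(lshift n.+1 i).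
Definition yv (i : 'I_n.+1) : {mpoly K[n.+1 + n.+1]} := 'X_(rshift n.+1 i).

Definition ham (a : 'I_(n.*2.+2) -> K) (t : K) : {mpoly K[n.+1 + n.+1]} :=
  t^-1 *: (\sum_(i < n.+1)
      ( 2^-1 *: (xv i ^+ 2 * yv i ^+ 2)
      - asum a (i.*2.+2) (n.*2%:Z - i.*2%:Z - 1) *: (xv i * yv i)
      + \sum_(j < n.+1 | (j < i)%N)
          xv i * (xv i * yv i + (aidx a i.*2.+1)%:MP) * yv j))
  + (1 - t)^-1 *: (\sum_(i < n.+1) \sum_(j < n.+1)
          xv i * (xv i * yv i + (aidx a i.*2.+1)%:MP) * yv j).

Definition pt (x y : 'I_n.+1 -> K) (k : 'I_(n.+1 + n.+1)) : K :=
  match split k with inl i => x i | inr i => y i end.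

Definition dxdt (a : 'I_(n.*2.+2) -> K) (t : K) (x y : 'I_n.+1 -> K)
  (i : 'I_n.+1) : K := (mderiv (rshift n.+1 i) (ham a t)).@[pt x y].
Definition dydt (a : 'I_(n.*2.+2) -> K) (t : K) (x y : 'I_n.+1 -> K)
  (i : 'I_n.+1) : K := - (mderiv (lshift n.+1 i) (ham a t)).@[pt x y].

(* residue matrices; E_{i,j} = delta_mx i j *)
Definition A0 (a : 'I_(n.*2.+2) -> K) : 'M[K]_n.+1 :=
  \sum_(i < n.+1 | (i < n)%N)
      (- asum a (i.*2.+2) (n.*2%:Z - i.*2%:Z - 1)) *: delta_mx i i
  + \sum_(i < n.+1 | (i < n)%N) \sum_(j < n.+1 | (i < j)%N)
      aidx a j.*2.+1 *: delta_mx i j.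
Definition A1 (a : 'I_(n.*2.+2) -> K) : 'M[K]_n.+1 :=
  \sum_(i < n.+1) \sum_(j < n.+1) aidx a j.*2.+1 *: delta_mx i j.

End Defs.

(* A linear system dx/dt = A(t) x on P^1 is Fuchsian with finite singular
   points poles`_k and residue matrices R`_k if A(t) = sum_k R_k/(t - a_k)
   (for t not a pole); its residue at infinity is then - sum_k R_k. *)
Definition fuchsian (K : fieldType) (m : nat) (A : K -> 'M[K]_m)
  (poles : seq K) (R : seq 'M[K]_m) : Prop :=
  size R = size poles /\
  forall t, t \notin poles ->
    A t = \sum_(k < size poles) (t - poles`_k)^-1 *: R`_k.

Definition res_infty (K : fieldType) (m : nat) (R : seq 'M[K]_m) : 'M[K]_m :=
  - \sum_(B <- R) B.

(* eigenvalues with multiplicities: roots of the characteristic polynomial *)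
Definition spectrum_is (K : fieldType) (m : nat) (B : 'M[K]_m)
  (ev : seq K) : Prop :=
  char_poly B = \prod_(l <- ev) ('X - l%:P).

From HB Require Import structures.
From mathcomp Require Import all_boot all_order all_algebra.
From mathcomp Require Import mpoly.
From mathcomp Require Import zify ring.
Set Implicit Arguments. Unset Strict Implicit. Unset Printing Implicit Defensive.
Import Order.TTheory GRing.Theory Num.Theory.
Local Open Scope ring_scope.

(* Every monomial of H has positive degree in y, so at y = 0 all the dH/dx_i
   vanish, while dH/dy_i only sees the monomials of degree one in y; their
   coefficients are the entries of A0/t + A1/(1-t).  The residue matrices A0
   and A_oo = A1 - A0 are triangular, so their spectra are their diagonals
   (using alpha_(2i+1) + alpha_(2i+2)^(2n-2i-1) = alpha_(2i+1)^(2n-2i)).  All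
   rows of -A1 are equal, and subtracting its last row from the others is a
   unipotent similarity making it triangular with diagonal 0, ..., 0, trace. *)

Lemma big_only1 (R : nmodType) (I : finType) (P : pred I) (F : I -> R) (r : I) :
  (forall i, P i -> i != r -> F i = 0) ->
  \sum_(i | P i) F i = if P r then F r else 0.
Proof.
move=> F0; case: ifPn => Pr.
  by rewrite (bigD1 r) //= big1 ?addr0 // => i /andP[Pi /F0->].
by rewrite big1 // => i Pi; apply: F0 => //; apply: contraNneq Pr => <-.
Qed.

Lemma char_poly_trmx (R : comNzRingType) m (A : 'M[R]_m) :
  char_poly A^T = char_poly A.
Proof.
rewrite /char_poly -det_tr; congr (\det _).
by apply/matrixP => i j; rewrite !mxE eq_sym.
Qed.

Lemma char_poly_conj (R : comNzRingType) m (P C A : 'M[R]_m) :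
  P *m C = 1%:M -> char_poly (P *m A *m C) = char_poly A.
Proof.
move=> PC; rewrite /char_poly /char_poly_mx !map_mxM.
have XE : ('X%:M : 'M[{poly R}]_m) = map_mx polyC P *m 'X%:M *m map_mx polyC C.
  rewrite mul_mx_scalar -scalemxAl -map_mxM PC.
  by apply/matrixP => i j; rewrite !mxE; case: (i == j); rewrite /= ?mulr1 ?mulr0.
rewrite [in LHS]XE -mulmxBl -mulmxBr !det_mulmx mulrAC -det_mulmx -map_mxM PC.
by rewrite map_scalar_mx det_scalar expr1n mul1r.
Qed.

Lemma char_poly_trig_rcons (R : comNzRingType) m (A : 'M[R]_m.+1)
    (d : nat -> R) (e : R) :
  is_trig_mx A ->
  (forall i : 'I_m, A (widen_ord (leqnSn m) i) (widen_ord (leqnSn m) i) = d i) ->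
  A ord_max ord_max = e ->
  char_poly A = \prod_(l <- rcons [seq d i | i <- iota 0 m] e) ('X - l%:P).
Proof.
move=> /char_poly_trig -> Ad Ae.
rewrite big_ord_recr big_rcons /= big_map -[m in iota _ m]subn0 big_mkord Ae.
by congr (_ * _); apply: eq_bigr => i _; rewrite Ad.
Qed.

Lemma fuchsian_two_poles (F : fieldType) m (B C : 'M[F]_m) :
  fuchsian (fun t => t^-1 *: B + (1 - t)^-1 *: C) [:: 0; 1] [:: B; - C].
Proof.
split=> // t _; rewrite !big_ord_recl big_ord0 /= subr0 addr0.
by rewrite scalerN -scaleNr -invrN opprB.
Qed.

Lemma res_infty_pair (R : fieldType) m (B C : 'M[R]_m) :
  res_infty [:: B; C] = - (B + C).
Proof. by rewrite /res_infty !big_cons big_nil addr0. Qed.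

Lemma mderivXU (R : nzRingType) m (i j : 'I_m) :
  mderiv i ('X_j : {mpoly R[m]}) = (j == i)%:R%:MP.
Proof.
rewrite mderivX mnm1E; case: eqVneq => [->|_]; last by rewrite scale0r mpolyC0.
have -> : (U_(i) - U_(i) = 0)%MM by apply/mnmP => l; rewrite mnmBE subnn mnm0E.
by rewrite mpolyX0 scale1r mpolyC1.
Qed.

Lemma meval_mderiv_sum (R : comNzRingType) m (k : 'I_m) (v : 'I_m -> R)
    (I : Type) (r : seq I) (P : pred I) (F : I -> {mpoly R[m]}) :
  (mderiv k (\sum_(i <- r | P i) F i)).@[v] = \sum_(i <- r | P i) (mderiv k (F i)).@[v].
Proof. by rewrite (raddf_sum (mderiv k)) (raddf_sum (meval v)). Qed.

Section ConstRows.
Variables (R : comNzRingType) (m : nat).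

Let N : 'M[R]_m.+1 := \matrix_(i, j) ((i != ord_max) && (j == ord_max))%:R.

Let N_sqr : N *m N = 0.
Proof.
apply/matrixP => i j; rewrite !mxE big1 // => k _; rewrite !mxE.
by case: (k == ord_max); rewrite ?andbF /= ?mulr0 ?mul0r.
Qed.

Let unipotent_inv : (1%:M - N) *m (1%:M + N) = 1%:M.
Proof. by rewrite mulmxBl mul1mx mulmxDr mulmx1 N_sqr addr0 addrK. Qed.

Lemma char_poly_const_rows (v : 'I_m.+1 -> R) :
  char_poly (\matrix_(i, j) v j) =
  \prod_(l <- rcons (nseq m 0) (\sum_j v j)) ('X - l%:P).
Proof.
set B := \matrix_(i, j) v j.
have reducedE r s : ((1%:M - N) *m B) r s = (r == ord_max)%:R * v s.
  rewrite mulmxBl mul1mx !mxE (big_only1 (r := ord_max)); last first.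
    by move=> k _ /negbTE kn; rewrite !mxE kn andbF mul0r.
  by rewrite !mxE eqxx andbT; case: (r == ord_max); rewrite /= ?(mul1r, mul0r, subrr, subr0).
have conjE r s : ((1%:M - N) *m B *m (1%:M + N)) r s =
    (r == ord_max)%:R * (v s + (s == ord_max)%:R * \sum_(k | k != ord_max) v k).
  rewrite mulmxDr mulmx1 mxE [X in _ + X]mxE reducedE mulrDr; congr (_ + _).
  rewrite (bigD1 ord_max) //= [N _ _]mxE eqxx /= mulr0 add0r.
  rewrite !mulr_sumr; apply: eq_bigr => k kn.
  by rewrite reducedE [N _ _]mxE kn /= mulrAC -mulrA.
have -> : nseq m (0 : R) = mkseq (fun=> 0) m.
  by rewrite -[LHS](mkseq_nth 0) size_nseq; apply: eq_mkseq => i; rewrite nth_nseq if_same.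
rewrite -(char_poly_conj B unipotent_inv); apply: char_poly_trig_rcons.
- apply/is_trig_mxP => i j ij; rewrite conjE.
  suff /negbTE-> : i != ord_max by rewrite mul0r.
  by rewrite -val_eqE /= neq_ltn (leq_trans ij) // -ltnS.
- by move=> i; rewrite conjE -val_eqE /= ltn_eqF // mul0r.
- by rewrite conjE eqxx !mul1r [RHS](bigD1 ord_max).
Qed.

End ConstRows.

Section ResidueMatrices.
Variables (K : numClosedFieldType) (n : nat) (a : 'I_(n.*2.+2) -> K).

Local Notation w j := (aidx a j.*2.+1).
Local Notation c i := (asum a i.*2.+2 (n.*2%:Z - i.*2%:Z - 1)).

Lemma asum_neg k (l : int) : (l < 0)%R -> asum a k l = 0.
Proof. by rewrite /asum => ->. Qed.

Lemma asum_last_diag : c n = 0.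
Proof. by apply: asum_neg; lia. Qed.

Lemma asum_odd_split i : (i < n)%N -> w i + c i = asum a i.*2.+1 (n.*2%:Z - i.*2%:Z).
Proof.
move=> lt_in; rewrite /asum; have -> : (n.*2%:Z - i.*2%:Z - 1 < 0) = false by lia.
have -> : (n.*2%:Z - i.*2%:Z < 0) = false by lia.
have -> : absz (n.*2%:Z - i.*2%:Z - 1)%R = (n.*2 - i.*2).-1%N by lia.
have -> : absz (n.*2%:Z - i.*2%:Z)%R = (n.*2 - i.*2)%N by lia.
rewrite [RHS]big_ltn; last by lia.
by congr (_ + \sum_(_ <= _ < _) _); lia.
Qed.

Lemma A1E : A1 a = \matrix_(i, j) w j.
Proof.
apply/matrixP => r s; rewrite mxE summxE (big_only1 (r := r)) => [|i _ ir]; last first.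
  by rewrite summxE big1 // => j _; rewrite !mxE eq_sym (negbTE ir) mulr0.
rewrite summxE (big_only1 (r := s)) => [|j _ js]; last first.
  by rewrite !mxE eqxx eq_sym (negbTE js) mulr0.
by rewrite !mxE !eqxx mulr1.
Qed.

(* The diagonal sum in A0 stops at i = n - 1, but the same formula is also
   right at i = n because alpha_k^(-1) = 0. *)
Lemma A0E : A0 a = \matrix_(r, s) ((r == s)%:R * - c r + (r < s)%N%:R * w s).
Proof.
apply/matrixP => r s; rewrite [RHS]mxE mxE !summxE.
rewrite (big_only1 (r := r)) => [|i _ ir]; last first.
  by rewrite !mxE eq_sym (negbTE ir) mulr0.
rewrite (big_only1 (r := r)) => [|i _ ir]; last first.
  by rewrite summxE big1 // => j _; rewrite !mxE eq_sym (negbTE ir) mulr0.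
rewrite summxE (big_only1 (r := s)) => [|j _ js]; last first.
  by rewrite !mxE eqxx eq_sym (negbTE js) mulr0.
rewrite !mxE !eqxx mulr1 eq_sym.
case: (eqVneq r s) => [<-|/negbTE rs]; rewrite ?ltnn ?rs /= ?if_same ?addr0.
  rewrite mulr1 mul1r mul0r addr0; case: ltnP => // le_nr.
  have -> : nat_of_ord r = n by have := ltn_ord r; lia.
  by rewrite asum_last_diag oppr0.
rewrite mulr0 mul0r !if_same !add0r.
case: (ltnP r s) => [lt_rs|_]; last by rewrite if_same mul0r.
by rewrite mul1r ifT //; have := ltn_ord s; lia.
Qed.

Lemma char_poly_A0 : char_poly (A0 a) =
  \prod_(l <- rcons [seq - c i | i <- iota 0 n] 0) ('X - l%:P).
Proof.
rewrite -char_poly_trmx A0E; apply: char_poly_trig_rcons => [|i|]; rewrite ?mxE.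
- apply/is_trig_mxP => i j lt_ij; rewrite !mxE -val_eqE /= (gtn_eqF lt_ij) ltnNge ltnW //.
  by rewrite mul0r mul0r addr0.
- by rewrite eqxx ltnn mul1r mul0r addr0.
- by rewrite eqxx ltnn mul1r mul0r addr0 asum_last_diag oppr0.
Qed.

Lemma char_poly_oppA1 : char_poly (- A1 a) =
  \prod_(l <- rcons (nseq n 0) (- \sum_(i < n.+1) w i)) ('X - l%:P).
Proof.
have -> : - A1 a = \matrix_(i, j) - w j by apply/matrixP => i j; rewrite A1E !mxE.
by rewrite char_poly_const_rows sumrN.
Qed.

Lemma char_poly_res_infty : char_poly (res_infty [:: A0 a; - A1 a]) =
  \prod_(l <- rcons [seq asum a i.*2.+1 (n.*2%:Z - i.*2%:Z) | i <- iota 0 n] (w n))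
    ('X - l%:P).
Proof.
rewrite res_infty_pair opprD opprK addrC A0E A1E.
apply: char_poly_trig_rcons => [|i|]; rewrite ?mxE ?eqxx ?ltnn ?mul1r ?mul0r ?addr0.
- apply/is_trig_mxP => i j lt_ij; rewrite !mxE -val_eqE /= ltn_eqF // lt_ij.
  by rewrite mul0r add0r mul1r subrr.
- by rewrite opprK (asum_odd_split (ltn_ord i)).
- by rewrite asum_last_diag oppr0 subr0.
Qed.

End ResidueMatrices.

Section HamiltonianAtZeroY.
Variables (K : numClosedFieldType) (n : nat).

Local Notation xv := (xv K).
Local Notation yv := (yv K).
Local Notation dx k := (mderiv (lshift n.+1 k)).
Local Notation dy k := (mderiv (rshift n.+1 k)).
Local Notation at0 x := (pt x (fun _ : 'I_n.+1 => 0)).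

Lemma mderiv_x_xv k i : dx k (xv i) = (i == k)%:R%:MP.
Proof. by rewrite mderivXU eq_lshift. Qed.

Lemma mderiv_x_yv k i : dx k (yv i) = 0.
Proof. by rewrite mderivXU eq_rlshift mpolyC0. Qed.

Lemma mderiv_y_xv k i : dy k (xv i) = 0.
Proof. by rewrite mderivXU eq_lrshift mpolyC0. Qed.

Lemma mderiv_y_yv k i : dy k (yv i) = (i == k)%:R%:MP.
Proof. by rewrite mderivXU eq_rshift. Qed.

Lemma meval_xv (x y : 'I_n.+1 -> K) i : (xv i).@[pt x y] = x i.
Proof.
rewrite mevalXU /pt; case: splitP => j /=; last by have := ltn_ord i; lia.
by move/val_inj->.
Qed.

Lemma meval_yv (x y : 'I_n.+1 -> K) i : (yv i).@[pt x y] = y i.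
Proof.
rewrite mevalXU /pt; case: splitP => [j /=|j /eqP]; first by have := ltn_ord j; lia.
by rewrite eqn_add2l => /eqP /val_inj->.
Qed.

Let simp_y0 := (mderivD, mderivB, mderivN, mderivM, mderivZ, mderivC, expr2,
  mderiv_x_xv, mderiv_x_yv, mderiv_y_xv, mderiv_y_yv,
  mevalD, mevalB, mevalN, mevalM, mevalZ, mevalC, meval0, meval_xv, meval_yv).

Lemma dx_coupling_at0 x (c : K) k j i :
  (dx i (xv k * (xv k * yv k + c%:MP) * yv j)).@[at0 x] = 0.
Proof. by rewrite !simp_y0 !(mulr0, mul0r, addr0, add0r). Qed.

Lemma dy_coupling_at0 x (c : K) k j i :
  (dy i (xv k * (xv k * yv k + c%:MP) * yv j)).@[at0 x] = (j == i)%:R * (c * x k).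
Proof. by rewrite !simp_y0 !(mulr0, mul0r, addr0, add0r) mulrC (mulrC (x k)). Qed.

Lemma dx_diag_at0 x (c : K) k i :
  (dx i (2^-1 *: (xv k ^+ 2 * yv k ^+ 2) - c *: (xv k * yv k))).@[at0 x] = 0.
Proof. by rewrite !simp_y0 !(mulr0, mul0r, addr0, add0r, subr0, oppr0). Qed.

Lemma dy_diag_at0 x (c : K) k i :
  (dy i (2^-1 *: (xv k ^+ 2 * yv k ^+ 2) - c *: (xv k * yv k))).@[at0 x] =
  (k == i)%:R * (- c * x k).
Proof. by rewrite !simp_y0 !(mulr0, mul0r, addr0, add0r, sub0r); ring. Qed.

End HamiltonianAtZeroY.

Section HamiltonianFlow.
Variables (K : numClosedFieldType) (n : nat) (a : 'I_(n.*2.+2) -> K).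
Variables (t : K) (x : 'I_n.+1 -> K).

Lemma dydt_at0 i : dydt a t x (fun=> 0) i = 0.
Proof.
rewrite /dydt /ham mderivD !mderivZ mevalD !mevalZ !meval_mderiv_sum.
rewrite [X in t^-1 * X]big1 => [|k _]; last first.
  rewrite /= mderivD mevalD dx_diag_at0 meval_mderiv_sum big1 ?addr0 // => j _.
  exact: dx_coupling_at0.
rewrite [X in (1 - t)^-1 * X]big1 => [|k _]; last first.
  by rewrite meval_mderiv_sum big1 // => j _; exact: dx_coupling_at0.
by rewrite !mulr0 addr0 oppr0.
Qed.

Lemma dxdt_at0 i : dxdt a t x (fun=> 0) i =
  ((t^-1 *: A0 a + (1 - t)^-1 *: A1 a) *m \col_k x k) i ord0.
Proof.
rewrite /dxdt /ham mderivD !mderivZ mevalD !mevalZ !meval_mderiv_sum.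
rewrite mxE !mulr_sumr -big_split /=; apply: eq_bigr => k _.
rewrite /= mderivD mevalD dy_diag_at0 !meval_mderiv_sum.
rewrite !(big_only1 (r := i)) => [|j _ /negbTE ji|j _ /negbTE ji];
  rewrite /= !dy_coupling_at0 ?ji ?mul0r //.
rewrite A0E A1E !mxE !eqxx !mul1r [k == i]eq_sym.
by case: (eqVneq i k) => [->|_]; case: (_ < _)%N; rewrite /=; ring.
Qed.

End HamiltonianFlow.

Theorem proposition2p3 (K : numClosedFieldType) (n : nat) (hn : (1 <= n)%N)
  (a : 'I_(n.*2.+2) -> K) (eta : K)
  (hsum : \sum_(i < n.*2.+2) a i = 1) (heta : eta = 0) :
  (forall (t : K), t != 0 -> t != 1 -> forall x : 'I_n.+1 -> K,
     \sum_(i < n.+1) x i * 0 + eta = 0 /\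
     forall i, dydt a t x (fun _ => 0) i = 0) /\
  (forall (t : K), t != 0 -> t != 1 -> forall x : 'I_n.+1 -> K,
     forall i, dxdt a t x (fun _ => 0) i =
       ((t^-1 *: A0 a + (1 - t)^-1 *: A1 a) *m \col_k x k) i ord0) /\
  fuchsian (fun t => t^-1 *: A0 a + (1 - t)^-1 *: A1 a)
           [:: 0; 1] [:: A0 a; - A1 a] /\
  spectrum_is (A0 a)
    (rcons [seq - asum a (i.*2.+2) (n.*2%:Z - i.*2%:Z - 1) | i <- iota 0 n] 0) /\
  spectrum_is (- A1 a)
    (rcons (nseq n 0) (- \sum_(i < n.+1) aidx a i.*2.+1)) /\
  spectrum_is (res_infty [:: A0 a; - A1 a])
    (rcons [seq asum a (i.*2.+1) (n.*2%:Z - i.*2%:Z) | i <- iota 0 n]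
           (aidx a n.*2.+1)).
Proof.
subst eta.
split.
  move=> t _ _ x; split=> [|i]; last exact: dydt_at0.
  by rewrite big1 ?add0r // => i _; rewrite mulr0.
split=> [t _ _ x i|]; first exact: dxdt_at0.
split; first exact: fuchsian_two_poles.
split; first exact: char_poly_A0.
split; first exact: char_poly_oppA1.
exact: char_poly_res_infty.
Qed.
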